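(* As $n\to\infty$, the ratio $|E(G_n)|/|E(SG(n,2))|$ tends to $2/3$.
   Context: Let $[n]=\{1,\dots,n\}$. A $2$-subset $\{a,b\}$ of $[n]$ with $a<b$ is called stable if $b \neq a+1$ and $\{a,b\}\neq\{1,n\}$; it is written $ab$. The Schrijver graph $SG(n,2)$ has as vertices all stable $2$-subsets of $[n]$, two being adjacent iff they are disjoint. For $n\ge 4$, the graph $G_n$ has the same vertex set; two vertices $ab$ ($a<b$) and $cd$ ($c<d$) with $a<c$ are adjacent in $G_n$ if and only if $\{a,b\}\cap\{c,d\}=\emptyset$ and either $a<c<b<d$, or $1<a<c<d<b$. *)

From mathcomp Require Import all_boot.
Set Implicit Arguments. Unset Strict Implicit. Unset Printing Implicit Defensive.

Definition stable (n a b : nat) : bool :=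
  [&& 1 <= a, a < b, b <= n, b != a.+1 & ~~ ((a == 1) && (b == n))].

Definition disj (a b c d : nat) : bool :=
  [&& a != c, a != d, b != c & b != d].

Definition SG_adj (a b c d : nat) : bool := disj a b c d.

Definition G_adj (a b c d : nat) : bool :=
  disj a b c d && ([&& a < c, c < b & b < d] || [&& 1 < a, a < c, c < d & d < b]).

(* Number of edges: each edge {ab, cd} is counted once, ordering its
   endpoints by a < c (a <> c holds for disjoint vertices). *)
Definition edge_count (adj : nat -> nat -> nat -> nat -> bool) (n : nat) : nat :=
  \sum_(a < n.+1) \sum_(b < n.+1) \sum_(c < n.+1) \sum_(d < n.+1)
    [&& stable n a b, stable n c d, a < c & adj a b c d].

Definition num_edges_SG (n : nat) : nat := edge_count SG_adj n.
Definition num_edges_G (n : nat) : nat := edge_count G_adj n.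

From Stdlib Require Import Reals Lra.
From Coquelicot Require Import Coquelicot.
From mathcomp Require Import all_boot zify.

(* With a < c, two disjoint pairs ab and cd are separated (a < b < c < d),
   crossing (a < c < b < d) or nested (a < c < d < b).  Each pattern is
   realised by exactly C(n,4) quadruples of [n].  SG(n,2) has an edge for
   every pattern and G_n for the crossing and nested ones, except for O(n^3)
   quadruples violating stability or having a = 1.  Hence
   |E(SG(n,2))| = 3 C(n,4) + O(n^3) and |E(G_n)| = 2 C(n,4) + O(n^3), while
   C(n,4) grows like n^4. *)

Local Open Scope nat_scope.

Definition sum4 (F : nat -> nat -> nat -> nat -> nat) (n : nat) : nat :=
  \sum_(a < n.+1) \sum_(b < n.+1) \sum_(c < n.+1) \sum_(d < n.+1) F a b c d.

Lemma leq_sum4 (F G : nat -> nat -> nat -> nat -> nat) n :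
  (forall a b c d, a <= n -> b <= n -> c <= n -> d <= n -> F a b c d <= G a b c d) ->
  sum4 F n <= sum4 G n.
Proof. by move=> FG; do 4 (apply: leq_sum => ? _); apply: FG; rewrite -ltnS. Qed.

Lemma sum4D (F G : nat -> nat -> nat -> nat -> nat) n :
  sum4 (fun a b c d => F a b c d + G a b c d) n = sum4 F n + sum4 G n.
Proof.
rewrite /sum4 -big_split; apply: eq_bigr => a _; rewrite -big_split.
apply: eq_bigr => b _; rewrite -big_split; apply: eq_bigr => c _.
by rewrite -big_split.
Qed.

Lemma sum4_acbd F n : sum4 (fun a b c d => F a c b d) n = sum4 F n.
Proof. by apply: eq_bigr => a _; rewrite exchange_big. Qed.

Lemma sum4_acdb F n : sum4 (fun a b c d => F a c d b) n = sum4 F n.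
Proof.
apply: eq_bigr => a _; rewrite exchange_big; apply: eq_bigr => c _.
by rewrite exchange_big.
Qed.

Lemma sum4_bcda F n : sum4 (fun a b c d => F b c d a) n = sum4 F n.
Proof.
rewrite /sum4 exchange_big; apply: eq_bigr => b _; rewrite exchange_big.
by apply: eq_bigr => c _; rewrite exchange_big.
Qed.

Lemma sum_ord_eq_nat N x : \sum_(i < N) (i == x :> nat) = (x < N).
Proof.
elim: N => [|N IH]; first by rewrite big_ord0.
by rewrite big_ord_recr /= IH; lia.
Qed.

Lemma sum_ord_le_const N k (F : 'I_N -> nat) :
  (forall i, F i <= k) -> \sum_(i < N) F i <= N * k.
Proof. by move=> Fk; rewrite -[N in N * k]card_ord -sum_nat_const; exact: leq_sum. Qed.

Lemma sum4_eq_last_le (g : nat -> nat -> nat -> nat) n :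
  sum4 (fun a b c d => d == g a b c) n <= n.+1 ^ 3.
Proof.
have -> : n.+1 ^ 3 = n.+1 * (n.+1 * (n.+1 * 1)) by rewrite muln1.
by do 3 (apply: sum_ord_le_const => ?); rewrite sum_ord_eq_nat leq_b1.
Qed.

Lemma sum4_first_eq1_le n : sum4 (fun a _ _ _ => a == 1) n <= n.+1 ^ 3.
Proof. by rewrite (sum4_bcda (fun _ _ _ d => d == 1 : nat)); exact: sum4_eq_last_le. Qed.

Lemma sum_ord_window_ge N (F : 'I_N -> nat) lo m k :
  lo + m <= N -> (forall i : 'I_N, lo <= i < lo + m -> k <= F i) ->
  m * k <= \sum_(i < N) F i.
Proof.
move=> hN Fk; pose G j := oapp F 0 (insub j).
have -> : \sum_(i < N) F i = \sum_(0 <= j < N) G j.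
  by rewrite big_mkord; apply: eq_bigr => i _; rewrite /G valK.
have hlo := leq_trans (leq_addr m lo) hN.
rewrite (big_cat_nat (leq0n lo) hlo) (big_cat_nat (leq_addr m lo) hN) /= addnCA.
apply: leq_trans (leq_addr _ _).
rewrite -[m in m * k](addKn lo) -sum_nat_const_nat big_nat_cond [leqRHS]big_nat_cond.
apply: leq_sum => j /andP [hj _]; rewrite /G.
by case: insubP => [i _ eij | /negP]; [apply: Fk; rewrite eij | lia].
Qed.

Definition chain4 (a b c d : nat) : nat := [&& 0 < a, a < b, b < c & c < d].

Definition quads (n : nat) : nat := sum4 chain4 n.

Lemma chain4_interleavings_le1 a b c d :
  chain4 a b c d + chain4 a c b d + chain4 a c d b <= 1.
Proof. rewrite /chain4; lia. Qed.

Lemma sum4_interleavings n :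
  sum4 (fun a b c d => chain4 a b c d + chain4 a c b d + chain4 a c d b) n = 3 * quads n.
Proof. by rewrite !sum4D (sum4_acbd chain4) (sum4_acdb chain4) /quads; lia. Qed.

Lemma sum4_crossing_nested n :
  sum4 (fun a b c d => chain4 a c b d + chain4 a c d b) n = 2 * quads n.
Proof. by rewrite !sum4D (sum4_acbd chain4) (sum4_acdb chain4) /quads; lia. Qed.

Lemma quads_ge m n : 4 * m <= n -> m ^ 4 <= quads n.
Proof.
move=> le_4m_n; have -> : m ^ 4 = m * (m * (m * (m * 1))) by rewrite muln1.
apply: (@sum_ord_window_ge _ _ 1) => [|a ha]; first lia.
apply: (@sum_ord_window_ge _ _ m.+1) => [|b hb]; first lia.
apply: (@sum_ord_window_ge _ _ m.*2.+1) => [|c hc]; first lia.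
apply: (@sum_ord_window_ge _ _ (3 * m).+1) => [|d hd]; first lia.
rewrite /chain4; lia.
Qed.

Lemma quads_ge_quartic n : 7 <= n -> n.+1 ^ 4 <= 4096 * quads n.
Proof.
move=> le_7n; apply: (@leq_trans ((8 * (n %/ 4)) ^ 4)).
  by rewrite leq_exp2r //; lia.
by rewrite expnMn leq_mul2l quads_ge ?orbT //; lia.
Qed.

Definition edge_ind adj n (a b c d : nat) : nat :=
  [&& stable n a b, stable n c d, a < c & adj a b c d].

Lemma edge_count_sum4 adj n : edge_count adj n = sum4 (edge_ind adj n) n.
Proof. by []. Qed.

(* [b == n] and [d == n] also cover the excluded pair {1, n}. *)
Definition boundary_defect n (a b c d : nat) : nat :=
  (b == a.+1) + (b == n) + (d == c.+1) + (d == n).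

Lemma sum4_boundary_defect_le n : sum4 (boundary_defect n) n <= 4 * n.+1 ^ 3.
Proof.
rewrite !sum4D (sum4_acdb (fun a _ _ d => d == a.+1 : nat)).
rewrite (sum4_acdb (fun _ _ _ d => d == n : nat)) !mulSn mul0n addn0 !addnA.
by do 3 (apply: leq_add; last exact: sum4_eq_last_le); exact: sum4_eq_last_le.
Qed.

Lemma edge_ind_SG_le n a b c d :
  edge_ind SG_adj n a b c d <= chain4 a b c d + chain4 a c b d + chain4 a c d b.
Proof. rewrite /edge_ind /SG_adj /stable /disj /chain4; lia. Qed.

Lemma edge_ind_G_le n a b c d :
  edge_ind G_adj n a b c d <= chain4 a c b d + chain4 a c d b.
Proof. rewrite /edge_ind /G_adj /stable /disj /chain4; lia. Qed.

Lemma interleavings_le_edge_ind_SG n a b c d : b <= n -> d <= n ->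
  chain4 a b c d + chain4 a c b d + chain4 a c d b <=
  edge_ind SG_adj n a b c d + boundary_defect n a b c d.
Proof.
move=> hb hd; have := chain4_interleavings_le1 a b c d; rewrite /boundary_defect.
do 4 (case: eqP => [_|/eqP ?]; first lia).
rewrite /= !addn0 => _; rewrite /edge_ind /SG_adj /stable /disj /chain4; lia.
Qed.

Lemma crossing_nested_le_edge_ind_G n a b c d : b <= n -> d <= n ->
  chain4 a c b d + chain4 a c d b <=
  edge_ind G_adj n a b c d + (boundary_defect n a b c d + (a == 1)).
Proof.
move=> hb hd; have := chain4_interleavings_le1 a b c d; rewrite /boundary_defect.
do 5 (case: eqP => [_|/eqP ?]; first lia).
rewrite /= !addn0 => _; rewrite /edge_ind /G_adj /stable /disj /chain4; lia.
Qed.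

Lemma num_edges_SG_approx n :
  num_edges_SG n <= 3 * quads n <= num_edges_SG n + 4 * n.+1 ^ 3.
Proof.
rewrite /num_edges_SG edge_count_sum4 -sum4_interleavings; apply/andP; split.
  by apply: leq_sum4 => a b c d _ _ _ _; exact: edge_ind_SG_le.
apply: leq_trans (leq_add (leqnn _) (sum4_boundary_defect_le n)); rewrite -sum4D.
by apply: leq_sum4 => a b c d _ hb _ hd; exact: interleavings_le_edge_ind_SG.
Qed.

Lemma num_edges_G_approx n :
  num_edges_G n <= 2 * quads n <= num_edges_G n + 5 * n.+1 ^ 3.
Proof.
rewrite /num_edges_G edge_count_sum4 -sum4_crossing_nested; apply/andP; split.
  by apply: leq_sum4 => a b c d _ _ _ _; exact: edge_ind_G_le.
have defect := leq_add (sum4_boundary_defect_le n) (sum4_first_eq1_le n).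
rewrite -mulSnr -sum4D in defect; apply: leq_trans (leq_add (leqnn _) defect).
by rewrite -sum4D; apply: leq_sum4 => a b c d _ hb _ hd; exact: crossing_nested_le_edge_ind_G.
Qed.

Local Open Scope R_scope.

Lemma INR_expn (m k : nat) : INR (m ^ k)%N = INR m ^ k.
Proof. by elim: k => [|k IH] //=; rewrite expnS mult_INR IH. Qed.

Lemma INR_gap {u v w : nat} : (u <= v <= u + w)%N -> 0 <= INR v - INR u <= INR w.
Proof. by move=> /andP [/leP/le_INR uv /leP/le_INR vw]; rewrite plus_INR in vw; lra. Qed.

Lemma is_lim_seq_ratio_gap (u q e : nat -> R) (c K : R) :
  eventually (fun n => 0 < q n /\ 0 <= c * q n - u n <= K * e n) ->
  is_lim_seq (fun n => e n / q n) 0 ->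
  is_lim_seq (fun n => u n / q n) c.
Proof.
move=> [N gap] lim_e.
apply: (is_lim_seq_le_le_loc (fun n => c - K * (e n / q n)) _ (fun=> c)).
- exists N => n /gap [q_pos [gap_ge0 gap_le]].
  have -> : u n / q n = c - (c * q n - u n) / q n by field; lra.
  have -> : K * (e n / q n) = K * e n / q n by field; lra.
  have inv_q_ge0 := Rlt_le _ _ (Rinv_0_lt_compat _ q_pos).
  have := Rmult_le_pos _ _ gap_ge0 inv_q_ge0.
  have := Rmult_le_compat_r _ _ _ inv_q_ge0 gap_le.
  rewrite /Rdiv; lra.
- have lim_Ke := is_lim_seq_mult' _ _ _ _ (is_lim_seq_const K) lim_e.
  have := is_lim_seq_minus' _ _ _ _ (is_lim_seq_const c) lim_Ke.
  by rewrite Rmult_0_r Rminus_0_r.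
- exact: is_lim_seq_const.
Qed.

Lemma is_lim_seq_cube_div (q : nat -> R) (C : R) : 0 < C ->
  eventually (fun n => INR n.+1 ^ 4 <= C * q n) ->
  is_lim_seq (fun n => INR n.+1 ^ 3 / q n) 0.
Proof.
move=> C_pos [N quartic_le].
apply: (is_lim_seq_le_le_loc (fun=> 0) _ (fun n => C * / INR n.+1)).
- exists N => n /quartic_le le_q.
  have n1_pos : 0 < INR n.+1 by apply: lt_0_INR; lia.
  have cube_pos : 0 < INR n.+1 ^ 3 by apply: pow_lt.
  have q_pos : 0 < q n by nra.
  split; first by apply: Rlt_le; apply: Rdiv_lt_0_compat.
  apply: (Rmult_le_reg_r (INR n.+1 * q n)); first exact: Rmult_lt_0_compat.
  have -> : INR n.+1 ^ 3 / q n * (INR n.+1 * q n) = INR n.+1 ^ 4 by field; lra.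
  by have -> : C * / INR n.+1 * (INR n.+1 * q n) = C * q n by field; lra.
- exact: is_lim_seq_const.
- apply/(is_lim_seq_incr_1 (fun n => C * / INR n)).
  have lim_inv : is_lim_seq (fun n => / INR n) 0.
    by apply: (is_lim_seq_inv _ _ is_lim_seq_INR).
  by have := is_lim_seq_scal_l _ C _ lim_inv; rewrite /= Rmult_0_r.
Qed.

Theorem proposition2 :
  Un_cv (fun n : nat => INR (num_edges_G n) / INR (num_edges_SG n)) (2 / 3).
Proof.
have quads_large n : (7 <= n)%coq_nat ->
    INR n.+1 ^ 4 <= 4096 * INR (quads n) /\ 0 < INR (quads n).
  move=> /leP /quads_ge_quartic /leP /le_INR.
  rewrite INR_expn mult_INR (INR_IZR_INZ 4096) [Z.of_nat _]/=.
  have : 0 < INR n.+1 ^ 4 by apply: pow_lt; apply: lt_0_INR; lia.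
  lra.
have lim_cube : is_lim_seq (fun n => INR n.+1 ^ 3 / INR (quads n)) 0.
  by apply: (is_lim_seq_cube_div _ 4096); [lra | exists 7%N => n /quads_large []].
have lim_G : is_lim_seq (fun n => INR (num_edges_G n) / INR (quads n)) 2.
  apply: (is_lim_seq_ratio_gap _ _ _ 2 5) lim_cube; exists 7%N => n /quads_large [_ q_pos].
  have := INR_gap (num_edges_G_approx n).
  by rewrite 2!mult_INR INR_expn [INR 2]/= [INR 5]/=; lra.
have lim_SG : is_lim_seq (fun n => INR (num_edges_SG n) / INR (quads n)) 3.
  apply: (is_lim_seq_ratio_gap _ _ _ 3 4) lim_cube; exists 7%N => n /quads_large [_ q_pos].
  have := INR_gap (num_edges_SG_approx n).
  by rewrite 2!mult_INR INR_expn [INR 3]/= [INR 4]/=; lra.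
apply/is_lim_seq_Reals.
apply: (is_lim_seq_ext_loc _ _ _ _ (is_lim_seq_div' _ _ _ _ lim_G lim_SG _)); last lra.
exists 7%N => n /quads_large [_ q_pos]; rewrite /Rdiv Rinv_mult Rinv_inv.
by rewrite -[RHS]Rmult_1_r -(Rinv_l (INR (quads n))); [ring | lra].
Qed.
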